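(* Let $(\mathcal{F},\mathcal{F}_d,R)$ be a complementary justification frame and $x\in\mathcal{F}_d$. If $J\in\mathfrak{J}(x)$ and $K\in\mathfrak{J}(\sim x)$, then there exists a $J$-branch $b$ starting in $x$ such that $\sim b$ is a $K$-branch starting in $\sim x$.
   Context: A fact space is a set $\mathcal{F}$ containing $\mathcal{L}=\{\mathbf{t},\mathbf{f},\mathbf{u}\}$, equipped with an involution $\sim$ with $\sim\mathbf{t}=\mathbf{f}$, $\sim\mathbf{u}=\mathbf{u}$, $\sim x\ne x$ for $x\ne\mathbf{u}$; $\sim A=\{\sim a:a\in A\}$, and for $b:x_0\to x_1\to\cdots$, $\sim b:\sim x_0\to\sim x_1\to\cdots$. A justification frame is $(\mathcal{F},\mathcal{F}_d,R)$ with defined facts $\mathcal{F}_d\subseteq\mathcal{F}$, $\sim\mathcal{F}_d=\mathcal{F}_d$, $\mathcal{L}\cap\mathcal{F}_d=\emptyset$, and rules $R\subseteq\mathcal{F}_d\times2^{\mathcal{F}}$ written $x\gets A$, such that each $x\in\mathcal{F}_d$ has a rule with nonempty body and no rule with empty body; open facts $\mathcal{F}_o=\mathcal{F}\setminus\mathcal{F}_d$. Let $R(x)$ be the set of bodies of rules with head $x$. A selection function for $x$ is a map $S:R(x)\to\mathcal{F}$ with $S(A)\in A$; $\mathrm{im}(S)$ is its image. The frame is complementary if for every $x\in\mathcal{F}_d$: (1) for every selection function $S$ for $x$ there is $A\in R(\sim x)$ with $A\subseteq\sim\mathrm{im}(S)$; (2) for every $A\in R(x)$ there is a selection function $S$ for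 $\sim x$ with $\sim\mathrm{im}(S)\subseteq A$. A (tree-like) justification is a directed labeled forest whose internal nodes $n$ are labeled by defined facts with $\ell(n)\gets\{\ell(m):(n,m)\text{ an edge}\}\in R$; it is locally complete if no leaf is labeled by a defined fact; rooted in $x$ if a node labeled $x$ reaches all nodes. $\mathfrak{J}(x)$ is the set of locally complete justifications rooted in $x$. A $J$-branch starting in $x$ is a path in $J$ from the root node labeled $x$ that is infinite or ends in a leaf. *)

From Stdlib Require Import Relations.

Set Implicit Arguments.

Record fact_space := {
  fact : Type;
  fneg : fact -> fact;
  ft : fact;
  ff : fact;
  fu : fact
}.

Definition is_fact_space (FS : fact_space) : Prop :=
  (forall x, fneg FS (fneg FS x) = x) /\
  ft FS <> ff FS /\ ft FS <> fu FS /\ ff FS <> fu FS /\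
  fneg FS (ft FS) = ff FS /\
  fneg FS (fu FS) = fu FS /\
  (forall x, x <> fu FS -> fneg FS x <> x).

Definition is_logical (FS : fact_space) (x : fact FS) : Prop :=
  x = ft FS \/ x = ff FS \/ x = fu FS.

Definition negset {FS : fact_space} (A : fact FS -> Prop) : fact FS -> Prop :=
  fun y => exists a, A a /\ y = fneg FS a.

(** A justification frame (F, F_d, R) over a fact space;
    rules x <- A are represented by  R x A  with A a subset of F. *)
Record frame := {
  fs : fact_space;
  defined : fact fs -> Prop;
  rule : fact fs -> (fact fs -> Prop) -> Prop
}.

Definition is_frame (Fr : frame) : Prop :=
  is_fact_space (fs Fr) /\
  (forall x, defined Fr x <-> defined Fr (fneg (fs Fr) x)) /\
  (forall x, @is_logical (fs Fr) x -> ~ defined Fr x) /\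
  (forall x A, rule Fr x A -> defined Fr x) /\
  (forall x, defined Fr x ->
     (exists A, rule Fr x A /\ exists a, A a) /\
     (forall A, rule Fr x A -> exists a, A a)).

(** Selection functions for x: S : R(x) -> F with S(A) in A
    (represented as a total function, constrained on R(x)). *)
Definition selection {Fr : frame} (x : fact (fs Fr))
  (S : (fact (fs Fr) -> Prop) -> fact (fs Fr)) : Prop :=
  forall A, rule Fr x A -> A (S A).

Definition sel_image {Fr : frame} (x : fact (fs Fr))
  (S : (fact (fs Fr) -> Prop) -> fact (fs Fr)) : fact (fs Fr) -> Prop :=
  fun y => exists A, rule Fr x A /\ S A = y.

Definition subset {T : Type} (A B : T -> Prop) : Prop := forall a, A a -> B a.

Definition complementary (Fr : frame) : Prop :=
  forall x, defined Fr x ->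
    (forall S, selection x S ->
       exists A, rule Fr (fneg (fs Fr) x) A /\
                 subset A (negset (sel_image x S))) /\
    (forall A, rule Fr x A ->
       exists S, selection (fneg (fs Fr) x) S /\
                 subset (negset (sel_image (fneg (fs Fr) x) S)) A).

Record justification (Fr : frame) := {
  jnode : Type;
  jedge : jnode -> jnode -> Prop;
  jlab : jnode -> fact (fs Fr)
}.

Definition is_leaf (Fr : frame) (J : justification Fr) (n : jnode J) : Prop :=
  forall m, ~ jedge J n m.

Definition is_forest (Fr : frame) (J : justification Fr) : Prop :=
  (forall m m' n, jedge J m n -> jedge J m' n -> m = m') /\
  (forall n, ~ clos_trans _ (jedge J) n n).

Definition is_justification (Fr : frame) (J : justification Fr) : Prop :=
  is_forest J /\
  (forall n, (exists m, jedge J n m) ->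
     defined Fr (jlab J n) /\
     rule Fr (jlab J n) (fun y => exists m, jedge J n m /\ jlab J m = y)).

Definition locally_complete (Fr : frame) (J : justification Fr) : Prop :=
  forall n, is_leaf J n -> ~ defined Fr (jlab J n).

Definition rooted_at (Fr : frame) (J : justification Fr) (x : fact (fs Fr))
  (r : jnode J) : Prop :=
  jlab J r = x /\ forall n, clos_refl_trans _ (jedge J) r n.

Definition in_JJ (Fr : frame) (x : fact (fs Fr)) (J : justification Fr) : Prop :=
  is_justification J /\ locally_complete J /\ exists r, rooted_at J x r.

(** A branch is given by its sequence of labels  b = s 0 -> s 1 -> ... :
    len = None : infinite branch (s i for all i);
    len = Some n : finite branch with n+1 nodes  s 0 -> ... -> s n. *)
Definition within (len : option nat) (i : nat) : Prop :=
  match len with None => True | Some n => i <= n end.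

Definition is_branch (Fr : frame) (J : justification Fr) (x : fact (fs Fr))
  (s : nat -> fact (fs Fr)) (len : option nat) : Prop :=
  exists (r : jnode J) (p : nat -> jnode J),
    rooted_at J x r /\ p 0 = r /\
    (forall i, within len (S i) -> jedge J (p i) (p (S i))) /\
    (forall i, within len i -> jlab J (p i) = s i) /\
    (match len with None => True | Some n => is_leaf J (p n) end).

Definition neg_branch {Fr : frame} (s : nat -> fact (fs Fr)) : nat -> fact (fs Fr) :=
  fun i => fneg (fs Fr) (s i).

From Stdlib Require Import Classical ClassicalEpsilon Wf_nat Lia.

(* Walk down J and K in lockstep, keeping the K-node labelled by the negation
   of the J-node.  At an internal J-node n with children labels A, the children
   of the dual K-node form a body of a rule for ~l(n); complementarity (2) gives
   a selection S for ~l(n) with ~im(S) ⊆ A, so the K-child picked by S has a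
   dual J-child.  At a J-leaf the label is open, hence so is its negation, and
   the dual K-node is a leaf too.  The walk thus ends in two leaves or is
   infinite, and its two label sequences are negations of each other. *)

Lemma maximal_path {X : Type} (R : X -> X -> Prop) (x0 : X) :
  exists (p : nat -> X) (len : option nat),
    p 0 = x0 /\
    (forall i, within len (S i) -> R (p i) (p (S i))) /\
    match len with None => True | Some n => forall y, ~ R (p n) y end.
Proof.
  pose (next := fun x => match excluded_middle_informative (exists y, R x y) with
                         | left H => proj1_sig (constructive_indefinite_description _ H)
                         | right _ => x end).
  assert (next_spec : forall x, ~ (forall y, ~ R x y) -> R x (next x)).
  { intros x Hx. unfold next.
    destruct (excluded_middle_informative _) as [H | H].
    - exact (proj2_sig (constructive_indefinite_description _ H)).
    - contradiction (Hx (fun y Hy => H (ex_intro _ y Hy))). }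
  pose (p := fun i => Nat.iter i next x0).
  destruct (classic (exists n, forall y, ~ R (p n) y)) as [Hstuck | Hfree].
  - destruct (dec_inh_nat_subset_has_unique_least_element _
                (fun n => classic _) Hstuck) as [n [[Hn Hleast] _]].
    exists p, (Some n). repeat split; [| exact Hn].
    intros i Hi. apply next_spec. intros Hi_stuck.
    specialize (Hleast i Hi_stuck). simpl in Hi. lia.
  - exists p, None. repeat split.
    intros i _. apply next_spec. intros Hi_stuck. eauto.
Qed.

Lemma internal_node_rule {Fr : frame} {J : justification Fr} {n : jnode J} :
  is_justification J -> ~ is_leaf J n ->
  defined Fr (jlab J n) /\
  rule Fr (jlab J n) (fun y => exists m, jedge J n m /\ jlab J m = y).
Proof.
  intros [_ HJ] Hn. apply HJ.
  exact (not_all_not_ex _ _ Hn).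
Qed.

Section DualWalk.

Variable Fr : frame.
Notation neg := (fneg (fs Fr)).
Hypothesis neg_involutive : forall y, neg (neg y) = y.
Hypothesis defined_neg : forall y, defined Fr y -> defined Fr (neg y).
Hypothesis Fr_complementary : complementary Fr.

Variables J K : justification Fr.
Hypothesis J_justification : is_justification J.
Hypothesis K_justification : is_justification K.
Hypothesis J_locally_complete : locally_complete J.
Hypothesis K_locally_complete : locally_complete K.

Definition dual_nodes (n : jnode J) (m : jnode K) : Prop :=
  jlab K m = neg (jlab J n).

Definition dual_step (p q : jnode J * jnode K) : Prop :=
  jedge J (fst p) (fst q) /\ jedge K (snd p) (snd q) /\ dual_nodes (fst q) (snd q).

Lemma dual_leaf {n m} : dual_nodes n m -> is_leaf J n -> is_leaf K m.
Proof.
  intros Hnm Hn. apply NNPP. intros Hm.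
  destruct (internal_node_rule K_justification Hm) as [Hdef _].
  apply (J_locally_complete n Hn).
  rewrite <- neg_involutive. apply defined_neg.
  rewrite <- Hnm. exact Hdef.
Qed.

Lemma dual_step_exists {n m} :
  dual_nodes n m -> ~ is_leaf J n -> exists q, dual_step (n, m) q.
Proof.
  intros Hnm Hn.
  destruct (internal_node_rule J_justification Hn) as [Hdef HruleJ].
  destruct (proj2 (Fr_complementary _ Hdef) _ HruleJ) as [S [HS Hsub]].
  assert (Hm : ~ is_leaf K m).
  { intros Hm. apply (K_locally_complete m Hm).
    rewrite Hnm. exact (defined_neg _ Hdef). }
  destruct (internal_node_rule K_justification Hm) as [_ HruleK].
  rewrite Hnm in HruleK.
  destruct (HS _ HruleK) as [m' [Hmm' Hlab_m']].
  assert (Hpicked : negset (sel_image (neg (jlab J n)) S) (neg (jlab K m'))).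
  { exists (jlab K m'). split; [| reflexivity].
    exists (fun y => exists m0, jedge K m m0 /\ jlab K m0 = y). auto. }
  destruct (Hsub _ Hpicked) as [n' [Hnn' Hlab_n']].
  exists (n', m'). repeat split; [exact Hnn' | exact Hmm' |].
  unfold dual_nodes. simpl. rewrite Hlab_n', neg_involutive. reflexivity.
Qed.

Lemma dual_stuck_leaves {n m} :
  dual_nodes n m -> (forall q, ~ dual_step (n, m) q) -> is_leaf J n /\ is_leaf K m.
Proof.
  intros Hnm Hstuck.
  assert (Hn : is_leaf J n).
  { apply NNPP. intros Hn.
    destruct (dual_step_exists Hnm Hn) as [q Hq]. exact (Hstuck q Hq). }
  split; [exact Hn | exact (dual_leaf Hnm Hn)].
Qed.

Lemma dual_branches_exist x rJ rK :
  rooted_at J x rJ -> rooted_at K (neg x) rK ->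
  exists (s : nat -> fact (fs Fr)) (len : option nat),
    is_branch J x s len /\ is_branch K (neg x) (neg_branch s) len.
Proof.
  intros HrJ HrK.
  destruct (maximal_path dual_step (rJ, rK)) as [p [len [Hp0 [Hsteps Hend]]]].
  assert (Hdual : forall i, within len i -> dual_nodes (fst (p i)) (snd (p i))).
  { intros [| i] Hi.
    - rewrite Hp0. unfold dual_nodes. simpl.
      rewrite (proj1 HrJ), (proj1 HrK). reflexivity.
    - exact (proj2 (proj2 (Hsteps i Hi))). }
  assert (Hleaves : match len with
                    | None => True
                    | Some n => is_leaf J (fst (p n)) /\ is_leaf K (snd (p n))
                    end).
  { destruct len as [n |]; [| exact I].
    apply (dual_stuck_leaves (Hdual n (le_n n))).
    intros q. rewrite <- surjective_pairing. apply Hend. }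
  exists (fun i => jlab J (fst (p i))), len. split.
  - exists rJ, (fun i => fst (p i)). repeat split.
    + exact (proj1 HrJ).
    + exact (proj2 HrJ).
    + rewrite Hp0. reflexivity.
    + intros i Hi. exact (proj1 (Hsteps i Hi)).
    + destruct len; [exact (proj1 Hleaves) | exact I].
  - exists rK, (fun i => snd (p i)). repeat split.
    + exact (proj1 HrK).
    + exact (proj2 HrK).
    + rewrite Hp0. reflexivity.
    + intros i Hi. exact (proj1 (proj2 (Hsteps i Hi))).
    + intros i Hi. exact (Hdual i Hi).
    + destruct len; [exact (proj2 Hleaves) | exact I].
Qed.

End DualWalk.

Theorem mainTheorem7 (Fr : frame) (x : fact (fs Fr))
  (J K : justification Fr) :
  is_frame Fr -> complementary Fr -> defined Fr x ->
  in_JJ x J -> in_JJ (fneg (fs Fr) x) K ->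
  exists (s : nat -> fact (fs Fr)) (len : option nat),
    is_branch J x s len /\
    is_branch K (fneg (fs Fr) x) (neg_branch s) len.
Proof.
  intros [[neg_involutive _] [defined_neg _]] Hcompl _
         [HJ [HJlc [rJ HrJ]]] [HK [HKlc [rK HrK]]].
  eapply dual_branches_exist; try eassumption.
  intros y Hy. exact (proj1 (defined_neg y) Hy).
Qed.
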